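(* Consider the joint caching and recommendation problem $$\max_{\mathbf X,\mathbf Y}\ \sum_{u=1}^{U}\sum_{i=1}^{N} y_i\Big[w_u^{\mathrm{rec}}\frac{x_{ui}}{R}+(1-w_u^{\mathrm{rec}})\,p_u^{\mathrm{pref}}(i)\Big]$$ subject to $\sum_i y_i\le C$, $\sum_i x_{ui}\le R$ for all $u$, and $x_{ui},y_i\in\{0,1\}$ for all $u,i$, where $1\le R\le C\le N$. Then the maximum is attained by caching a set $\mathbf Y^*$ of $C$ contents maximizing $\sum_i y_i\,\hat p_i$ (i.e. $C$ contents with largest $\hat p_i$) and, for each user $u$, recommending any $R$ contents among the cached ones ($x_{ui}=1$ only if $y_i=1$). In particular, the optimal caching decision is $$\mathbf Y^*\in\operatorname{argmax}_{\mathbf Y:\ \sum_i y_i\le C}\ \sum_i y_i\sum_u(1-w_u^{\mathrm{rec}})p_u^{\mathrm{pref}}(i).$$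
   Context: There are $N$ contents $\mathcal N=\{1,\dots,N\}$ and $U$ users $\mathcal U=\{1,\dots,U\}$. A base station has a cache of capacity $C$ contents and recommends at most $R\le C$ contents to each user. $y_i\in\{0,1\}$ indicates whether content $i$ is cached; $x_{ui}\in\{0,1\}$ indicates whether content $i$ is recommended to user $u$. For each user $u$, $p_u^{\mathrm{pref}}(\cdot)$ is a probability distribution on $\mathcal N$ (the request distribution without recommendations), and $w_u^{\mathrm{rec}}\in[0,1]$ is the probability that user $u$ accepts recommendations. The request probability of user $u$ for content $i$ is $p_u^{\mathrm{req}}(i)=w_u^{\mathrm{rec}}\,x_{ui}/R+(1-w_u^{\mathrm{rec}})p_u^{\mathrm{pref}}(i)$ (users choose uniformly among recommended contents). Define $\hat p_i:=\sum_u(1-w_u^{\mathrm{rec}})p_u^{\mathrm{pref}}(i)$. *)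

From mathcomp Require Import all_boot all_order all_algebra.
Set Implicit Arguments. Unset Strict Implicit. Unset Printing Implicit Defensive.
Import Order.TTheory GRing.Theory Num.Theory.
Local Open Scope ring_scope.

(* A caching decision is y : 'I_N -> bool
   (y i = true iff content i is cached); a recommendation decision is
   x : 'I_U -> 'I_N -> bool (x u i = true iff i is recommended to u). *)

Definition objective {K : realFieldType} (N U Rr : nat)
  (w : 'I_U -> K) (pref : 'I_U -> 'I_N -> K)
  (x : 'I_U -> 'I_N -> bool) (y : 'I_N -> bool) : K :=
  \sum_(u < U) \sum_(i < N)
     (y i)%:R * (w u * (x u i)%:R / Rr%:R + (1 - w u) * pref u i).

Definition feasible (N U Rr C : nat)
  (x : 'I_U -> 'I_N -> bool) (y : 'I_N -> bool) : Prop :=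
  ((\sum_(i < N) y i)%N <= C)%N /\ forall u : 'I_U, ((\sum_(i < N) x u i)%N <= Rr)%N.

Definition phat {K : realFieldType} (N U : nat)
  (w : 'I_U -> K) (pref : 'I_U -> 'I_N -> K) (i : 'I_N) : K :=
  \sum_(u < U) (1 - w u) * pref u i.

Definition cache_value {K : realFieldType} (N U : nat)
  (w : 'I_U -> K) (pref : 'I_U -> 'I_N -> K) (y : 'I_N -> bool) : K :=
  \sum_(i < N) (y i)%:R * phat w pref i.

(* Splitting each user's request probability, the objective is the recommendation
   term sum_u (w_u / R) #{cached contents recommended to u} plus the caching term
   sum_i y_i \hat p_i.  The first is at most sum_u w_u, with equality as soon as
   every user is recommended R cached contents, which is possible whenever R <= C
   contents are cached; the second depends only on the cache and is monotone in it
   since \hat p >= 0.  Hence the two terms can be maximized independently, and an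
   optimal cache maximizes the caching term. *)
From mathcomp Require Import all_boot all_order all_algebra.
From mathcomp Require Import zify.
Set Implicit Arguments. Unset Strict Implicit. Unset Printing Implicit Defensive.
Import Order.TTheory GRing.Theory Num.Theory.
Local Open Scope ring_scope.

Lemma sum_bool_card (T : finType) (y : T -> bool) : (\sum_i y i)%N = #|y|.
Proof.
rewrite -sum1_card [RHS]big_mkcond.
by apply: eq_bigr => i _; rewrite unfold_in; case: (y i).
Qed.

Lemma exists_set_card_between (T : finType) (A B : {set T}) k :
  A \subset B -> (#|A| <= k <= #|B|)%N ->
  exists C : {set T}, [/\ A \subset C, C \subset B & #|C| = k].
Proof.
move=> sAB /andP[leAk lekB].
have : (k - #|A| <= #|B :\: A|)%N by rewrite cardsD (setIidPr sAB) leq_sub2r.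
case/card_geqP=> s [uniq_s size_s sBA].
have AIs : A :&: [set x in s] = set0.
  by apply/setP=> x; rewrite !inE; apply/negbTE/andP=> -[xA /sBA]; rewrite inE xA.
exists (A :|: [set x in s]); split.
- exact: subsetUl.
- rewrite subUset sAB; apply/subsetP=> x; rewrite inE => /sBA.
  by rewrite inE => /andP[].
- rewrite cardsU AIs cards0 subn0 cardsE (card_uniqP uniq_s); lia.
Qed.

Lemma exists_pred_card_between (T : finType) (y z : T -> bool) k :
  subpred y z -> (#|y| <= k <= #|z|)%N ->
  exists y' : T -> bool, [/\ subpred y y', subpred y' z & #|y'| = k].
Proof.
move=> yz; rewrite -[#|y|]cardsE -[#|z|]cardsE.
case/(@exists_set_card_between _ [set i | y i] [set i | z i] k).
  by apply/subsetP=> i; rewrite !inE; apply: yz.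
move=> C [sAC sCB cardC]; exists (mem C); split=> // i.
- by move=> yi; apply: (subsetP sAC); rewrite inE.
- by move/(subsetP sCB); rewrite inE.
Qed.

Section JointCachingRecommendation.

Variables (K : realFieldType) (N U Rr : nat).
Variables (w : 'I_U -> K) (pref : 'I_U -> 'I_N -> K).
Hypothesis Rr_gt0 : (0 < Rr)%N.
Hypothesis w_01 : forall u, 0 <= w u <= 1.
Hypothesis pref_ge0 : forall u i, 0 <= pref u i.

Definition recommendation_value (x : 'I_U -> 'I_N -> bool) (y : 'I_N -> bool) : K :=
  \sum_(u < U) w u / Rr%:R * #|[pred i | y i && x u i]|%:R.

Lemma objectiveE x y :
  objective Rr w pref x y = recommendation_value x y + cache_value w pref y.
Proof.
rewrite /objective /recommendation_value /cache_value /phat.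
under eq_bigr => u _ do rewrite (eq_bigr _ (fun i _ => mulrDr _ _ _)) big_split /=.
rewrite big_split /=; congr (_ + _).
  apply: eq_bigr => u _; rewrite -sum_bool_card natr_sum mulr_sumr.
  apply: eq_bigr => i _.
  by rewrite /=; case: (y i); case: (x u i); rewrite /= ?(mul0r, mul1r, mulr0, mulr1).
rewrite exchange_big /=; apply: eq_bigr => i _; rewrite mulr_sumr.
by apply: eq_bigr => u _; rewrite mulrA.
Qed.

Lemma recommendation_value_le x y :
  (forall u, (#|x u| <= Rr)%N) -> recommendation_value x y <= \sum_(u < U) w u.
Proof.
move=> x_le; apply: ler_sum => u _.
have /andP[w_ge0 _] := w_01 u.
rewrite mulrAC ler_pdivrMr ?ltr0n // ler_wpM2l // ler_nat.
by apply: leq_trans (x_le u); apply: subset_leq_card; apply/subsetP=> i /andP[].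
Qed.

Lemma recommendation_value_cached x y :
  (forall u, #|x u| = Rr) -> (forall u, subpred (x u) y) ->
  recommendation_value x y = \sum_(u < U) w u.
Proof.
move=> x_card xy; apply: eq_bigr => u _.
have -> : #|[pred i | y i && x u i]| = Rr.
  rewrite -(x_card u); apply: eq_card => i; rewrite !inE.
  by case xi: (x u i); rewrite ?andbF ?(xy _ _ xi).
by rewrite mulrAC mulfK // pnatr_eq0 -lt0n.
Qed.

Lemma phat_ge0 i : 0 <= phat w pref i.
Proof.
apply: sumr_ge0 => u _; apply: mulr_ge0 => //.
by have /andP[_ w_le1] := w_01 u; rewrite subr_ge0.
Qed.

Lemma cache_value_mono (y y' : 'I_N -> bool) :
  subpred y y' -> cache_value w pref y <= cache_value w pref y'.
Proof.
move=> yy'; apply: ler_sum => i _.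
case yi: (y i); first by rewrite (yy' _ yi).
by rewrite mul0r mulr_ge0 ?phat_ge0.
Qed.

End JointCachingRecommendation.

Theorem mainTheorem1 (K : realFieldType) (N U Rr C : nat)
  (w : 'I_U -> K) (pref : 'I_U -> 'I_N -> K)
  (hRpos : (1 <= Rr)%N) (hRC : (Rr <= C)%N) (hCN : (C <= N)%N)
  (hw : forall u, 0 <= w u <= 1)
  (hpref0 : forall u i, 0 <= pref u i)
  (hpref1 : forall u, \sum_(i < N) pref u i = 1) :
  (forall (xs : 'I_U -> 'I_N -> bool) (ys : 'I_N -> bool),
     (\sum_(i < N) ys i)%N = C ->
     (forall y : 'I_N -> bool, (\sum_(i < N) y i)%N = C ->
        cache_value w pref y <= cache_value w pref ys) ->
     (forall u, (\sum_(i < N) xs u i)%N = Rr) ->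
     (forall u i, xs u i -> ys i) ->
     forall x y, feasible Rr C x y ->
       objective Rr w pref x y <= objective Rr w pref xs ys)
  /\
  (forall (xo : 'I_U -> 'I_N -> bool) (yo : 'I_N -> bool),
     feasible Rr C xo yo ->
     (forall x y, feasible Rr C x y ->
        objective Rr w pref x y <= objective Rr w pref xo yo) ->
     forall y : 'I_N -> bool, ((\sum_(i < N) y i)%N <= C)%N ->
       cache_value w pref y <= cache_value w pref yo).
Proof.
have card_sum (y : 'I_N -> bool) : (\sum_(i < N) y i)%N = #|y| := sum_bool_card y.
have fill_cache (y : 'I_N -> bool) : (#|y| <= C)%N ->
    exists y' : 'I_N -> bool, [/\ subpred y y', subpred y' predT & #|y'| = C].
  by move=> y_le; apply: exists_pred_card_between; rewrite // y_le card_ord.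
split.
  move=> xs ys ys_card ys_max xs_card xs_ys x y [y_le x_le].
  have rec_xs : recommendation_value Rr w xs ys = \sum_(u < U) w u.
    by apply: recommendation_value_cached => // u; rewrite -card_sum.
  have rec_x : recommendation_value Rr w x y <= \sum_(u < U) w u.
    by apply: recommendation_value_le => // u; rewrite -card_sum.
  rewrite !objectiveE rec_xs lerD //.
  rewrite card_sum in y_le; have [y' [yy' _ y'_card]] := fill_cache y y_le.
  by apply: le_trans (cache_value_mono hw hpref0 yy') (ys_max _ _); rewrite card_sum.
move=> xo yo [_ xo_le] yo_opt y; rewrite card_sum => /fill_cache[y' [yy' _ y'_card]].
have [z [_ zy' z_card]] :
    exists z : 'I_N -> bool, [/\ subpred pred0 z, subpred z y' & #|z| = Rr].
  by apply: exists_pred_card_between; rewrite // card0 y'_card.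
have rec_z : recommendation_value Rr w (fun=> z) y' = \sum_(u < U) w u.
  exact: recommendation_value_cached.
have rec_xo : recommendation_value Rr w xo yo <= \sum_(u < U) w u.
  by apply: recommendation_value_le => // u; rewrite -card_sum.
have opt : objective Rr w pref (fun=> z) y' <= objective Rr w pref xo yo.
  by apply: yo_opt; split=> [|u]; rewrite card_sum ?y'_card ?z_card.
rewrite !objectiveE rec_z in opt.
apply: le_trans (cache_value_mono hw hpref0 yy') _.
by rewrite -(lerD2l (\sum_(u < U) w u)) (le_trans opt) // lerD2r.
Qed.
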